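(* Let $\mathbf{x}$ be a feasible solution of $\textsc{Node-MC-Rel}$, let $\ell$ be uniform on $\{1,\dots,k\}$ and, independently, $\theta$ uniform on $(0,1/2)$, and $C=\bigcup_{i\neq\ell}B^+(s_i,\theta)$. Then $\mathbb{E}\big[\sum_{v\in C}w_v\big]\le 2(1-1/k)\sum_{v\in V}w_vx_v$.
   Context: $G=(V,E)$ is an undirected graph with non-negative node weights $w_v$ and terminal set $S=\{s_1,\dots,s_k\}$, $k\ge2$, forming an independent set. For $i<j$, $\mathcal{P}_{ij}$ is the set of paths between $s_i$ and $s_j$. $\textsc{Node-MC-Rel}$: minimize $\sum_{v\in V\setminus S}w_vx_v$ s.t. $\sum_{v\in p}x_v\ge1$ for all $p\in\mathcal{P}_{ij}$, $i<j$ (sum over all vertices of $p$ including endpoints), $x_v=0$ for $v\in S$, $x\ge0$. $d(a,b)$ is the minimum over paths from $a$ to $b$ of the sum of $x$ over all vertices of the path including both endpoints. $B(u,r)=\{v:d(u,v)\le r\}$; $B^+(u,r)$ is the set of nodes not in $B(u,r)$ adjacent to some node of $B(u,r)$. *)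

From Stdlib Require Import Reals ClassicalEpsilon.
From mathcomp Require Import all_boot.
Set Implicit Arguments. Unset Strict Implicit. Unset Printing Implicit Defensive.

Local Open Scope R_scope.

Section Graph.
Variables (V : finType) (adj : rel V).

Definition rsum_seq (s : seq V) (f : V -> R) : R := \big[Rplus/0]_(v <- s) f v.

Definition is_path (a b : V) (q : seq V) : Prop :=
  path adj a q /\ last a q = b /\ uniq (a :: q).

(* x-length of a path: sum of x over ALL its vertices, endpoints included *)
Definition path_len (x : V -> R) (a : V) (q : seq V) : R := rsum_seq (a :: q) x.

Definition is_dist (x : V -> R) (a b : V) (delta : R) : Prop :=
  (exists q, is_path a b q /\ path_len x a q = delta) /\
  (forall q, is_path a b q -> delta <= path_len x a q).

Definition ball (x : V -> R) (u : V) (r : R) (v : V) : Prop :=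
  exists delta, is_dist x u v delta /\ delta <= r.

Definition ball_plus (x : V -> R) (u : V) (r : R) (v : V) : Prop :=
  ~ ball x u r v /\ exists b, ball x u r b /\ adj b v.

Definition wset (w : V -> R) (P : V -> Prop) : R :=
  \big[Rplus/0]_(v : V) (if excluded_middle_informative (P v) then w v else 0).

Definition node_mc_feasible (k : nat) (s : 'I_k -> V) (x : V -> R) : Prop :=
  (forall v, 0 <= x v) /\
  (forall i, x (s i) = 0) /\
  (forall i j : 'I_k, (i < j)%N ->
     forall q, is_path (s i) (s j) q -> 1 <= path_len x (s i) q).

Definition cut_set (k : nat) (s : 'I_k -> V) (x : V -> R) (l : 'I_k) (theta : R)
  (v : V) : Prop :=
  exists i : 'I_k, i <> l /\ ball_plus x (s i) theta v.

Definition avg_cut_weight (k : nat) (s : 'I_k -> V) (w x : V -> R) (theta : R) : R :=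
  / INR k * \big[Rplus/0]_(l < k) wset w (cut_set s x l theta).

End Graph.

(* Fix a vertex v and write d_i = d(s_i, v).  Since x(s_i) = 0, v lies in
   B^+(s_i, θ) exactly when d_i - x_v <= θ < d_i.  Let i0 minimise d_i and
   m = d_i0 - x_v.  Gluing shortest paths from s_i and s_j to v gives an
   s_i-s_j path, so feasibility yields d_i + d_j - x_v >= 1 for i <> j; hence
   for θ < 1/2, v lies in some shell only if θ ∈ [m, m + x_v), and in a shell
   of a terminal other than s_i0 only if moreover θ >= max(m, 1 - x_v - m).
   In the first case v is cut for at most k - 1 values of ℓ (all but i0), in
   the second for at most k <= 2(k - 1).  The two θ-sets have total length at
   most x_v inside (0, 1/2), so integrating over θ and summing over v weighted
   by w_v gives the bound. *)

From Stdlib Require Import Reals Lra ClassicalEpsilon.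
From Coquelicot Require Import Coquelicot.
From mathcomp Require Import all_boot ssralg Rstruct.
Set Implicit Arguments. Unset Strict Implicit. Unset Printing Implicit Defensive.
Local Open Scope R_scope.

Ltac case_Rle_dec :=
  repeat (repeat match goal with H : context [Rle_dec _ _] |- _ => revert H end;
          match goal with |- context [Rle_dec ?a ?b] =>
            destruct (Rle_dec a b); cbn [is_left] end);
  intros.

Lemma sumR_le (I : Type) (r : seq I) (P : pred I) (F G : I -> R) :
  (forall i, P i -> F i <= G i) ->
  \big[Rplus/0]_(i <- r | P i) F i <= \big[Rplus/0]_(i <- r | P i) G i.
Proof. by move=> FG; apply: (big_ind2 Rle) => *; [lra | apply: Rplus_le_compat | apply: FG]. Qed.

Lemma sumR_ge0 (I : Type) (r : seq I) (P : pred I) (F : I -> R) :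
  (forall i, P i -> 0 <= F i) -> 0 <= \big[Rplus/0]_(i <- r | P i) F i.
Proof.
by move=> F_ge0; apply: big_ind => *; [lra | apply: Rplus_le_le_0_compat | apply: F_ge0].
Qed.

Lemma sumR_ord_one (k : nat) : \big[Rplus/0]_(l < k) 1 = INR k.
Proof. by rewrite big_const_ord; elim: k => [//|k IH]; rewrite iterS IH S_INR Rplus_comm. Qed.

Lemma exists_seq_min (T : eqType) (P : T -> Prop) (f : T -> R) (r : seq T) :
  (exists2 a, a \in r & P a) ->
  exists a, [/\ a \in r, P a & forall b, b \in r -> P b -> f a <= f b].
Proof.
elim: r => [|c r IH] [a]; first by [].
have [/IH [e [er Pe e_min]] _ _|no_r] := classic (exists2 a, a \in r & P a).
  have [[Pc ce]|not_c] := classic (P c /\ f c <= f e).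
    exists c; split=> [||b]; rewrite ?mem_head // inE => /orP[/eqP->|br] Pb; first lra.
    exact: Rle_trans ce (e_min b br Pb).
  exists e; split=> [||b]; rewrite ?inE ?er ?orbT // => /orP[/eqP->|br] Pb; last exact: e_min.
  by apply: Rnot_lt_le => ec; apply: not_c; split; [|lra].
rewrite inE => /orP[/eqP-> Pc|ar Pa]; last by case: no_r; exists a.
exists c; split=> [||b]; rewrite ?mem_head // inE => /orP[/eqP->|br] Pb; first lra.
by case: no_r; exists b.
Qed.

Section RealSums.
Variables (T : finType) (f : T -> R).

Lemma rsum_seq_cat (r q : seq T) : rsum_seq (r ++ q) f = rsum_seq r f + rsum_seq q f.
Proof. by rewrite /rsum_seq big_cat. Qed.

Lemma rsum_seq_rcons (r : seq T) v : rsum_seq (rcons r v) f = rsum_seq r f + f v.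
Proof. by rewrite -cats1 rsum_seq_cat /rsum_seq big_seq1. Qed.

Lemma rsum_seq_rev (r : seq T) : rsum_seq (rev r) f = rsum_seq r f.
Proof. by rewrite /rsum_seq big_rev. Qed.

Hypothesis f_ge0 : forall v, 0 <= f v.

Lemma rsum_seq_ge0 (r : seq T) : 0 <= rsum_seq r f.
Proof. exact: sumR_ge0. Qed.

Lemma rsum_seq_undup_le (r : seq T) : rsum_seq (undup r) f <= rsum_seq r f.
Proof.
rewrite /rsum_seq; elim: r => [|a r IH] /=; first lra.
by case: ifP => _; rewrite !big_cons; have := f_ge0 a; lra.
Qed.

Lemma rsum_seq_subset (r q : seq T) :
  uniq r -> {subset r <= q} -> rsum_seq r f <= rsum_seq q f.
Proof.
move=> r_uniq rq; apply: Rle_trans (rsum_seq_undup_le q).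
rewrite /rsum_seq (big_uniq _ r_uniq) (big_uniq _ (undup_uniq q)).
rewrite (big_mkcond (fun v => v \in r)) (big_mkcond (fun v => v \in undup q)).
apply: sumR_le => v _; case: ifP => [/rq vq|_]; first by rewrite mem_undup vq; lra.
by case: ifP => _; [apply: f_ge0 | lra].
Qed.

End RealSums.

Section SimplePaths.
Variables (V : finType) (adj : rel V) (x : V -> R).
Hypothesis x_ge0 : forall v, 0 <= x v.

Lemma path_len_rcons a q v : path_len x a (rcons q v) = path_len x a q + x v.
Proof. by rewrite /path_len -rcons_cons rsum_seq_rcons. Qed.

Lemma is_path_rcons a b q v :
  is_path adj a b q -> v \notin a :: q -> adj b v -> is_path adj a v (rcons q v).
Proof.
move=> [pq [<- uq]] vq bv; split; last split.
- by rewrite rcons_path pq bv.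
- by rewrite last_rcons.
- by rewrite -rcons_cons rcons_uniq vq uq.
Qed.

Lemma is_path_prefix a b q v : is_path adj a b q -> v \in a :: q ->
  exists2 q', is_path adj a v q' & path_len x a q' <= path_len x a q.
Proof.
move=> [pq [lq uq]]; rewrite inE => /orP[/eqP->|vq].
  exists [::]; first by [].
  by have := rsum_seq_ge0 x_ge0 q; rewrite /path_len /rsum_seq !big_cons big_nil; lra.
case/splitPr: vq pq lq uq => q1 q2 pq _ uq.
have split_q : a :: q1 ++ v :: q2 = (a :: rcons q1 v) ++ q2 by rewrite -cats1 /= -catA.
exists (rcons q1 v).
  split; last split; last by move: uq; rewrite split_q cat_uniq => /andP[].
  - by move: pq; rewrite cat_path rcons_path /= => /and3P[-> ->].
  - by rewrite last_rcons.
have := rsum_seq_ge0 x_ge0 q2.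
by rewrite /path_len split_q rsum_seq_cat; lra.
Qed.

Lemma is_path_glue a b v qa qb : symmetric adj ->
  is_path adj a v qa -> is_path adj b v qb ->
  exists2 q, is_path adj a b q & path_len x a q <= path_len x a qa + path_len x b qb - x v.
Proof.
move=> adj_sym [pa [la _]] [pb [lb _]].
have last_rev : last (last b qb) (rev (belast b qb)) = b.
  by have := last_rcons b (rev qb) b; rewrite -rev_cons lastI rev_rcons.
set walk := qa ++ rev (belast b qb).
have walk_path : path adj a walk.
  rewrite cat_path pa la -lb rev_path /=.
  by rewrite (@eq_path _ _ adj) // => y z; rewrite adj_sym.
have walk_last : last a walk = b by rewrite last_cat la -lb last_rev.
have walk_len : path_len x a walk = path_len x a qa + path_len x b qb - x v.
  rewrite /path_len -cat_cons rsum_seq_cat rsum_seq_rev.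
  by rewrite (lastI b qb) rsum_seq_rcons lb; lra.
rewrite -walk_len; case: (shortenP walk_path) walk_last => q q_path q_uniq q_sub q_last.
exists q; first by split.
by apply: rsum_seq_subset => // y; rewrite !inE => /orP[->//|/q_sub ->]; rewrite orbT.
Qed.

Lemma is_path_size a b q : is_path adj a b q -> (size q < #|V|)%N.
Proof. by move=> [_ [_ /card_uniqP/= q_card]]; rewrite -q_card max_card. Qed.

Definition short_seqs : seq (seq V) :=
  flatten [seq [seq val t | t <- enum {: n.-tuple V}] | n <- iota 0 #|V|].

Lemma mem_short_seqs q : (size q < #|V|)%N -> q \in short_seqs.
Proof.
move=> q_size; apply/flatten_mapP; exists (size q); first by rewrite mem_iota.
by apply/mapP; exists (in_tuple q); rewrite ?mem_enum.
Qed.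

Lemma exists_dist a b : (exists q, is_path adj a b q) -> exists d, is_dist adj x a b d.
Proof.
move=> [q0 q0_path].
have [|q [_ q_path q_min]] :=
  exists_seq_min (path_len x a) (P := is_path adj a b) (r := short_seqs).
  by exists q0; first exact/mem_short_seqs/(is_path_size q0_path).
exists (path_len x a q); split; first by exists q.
by move=> q' q'_path; apply: q_min => //; exact/mem_short_seqs/(is_path_size q'_path).
Qed.

Lemma is_dist_unique a b d1 d2 : is_dist adj x a b d1 -> is_dist adj x a b d2 -> d1 = d2.
Proof.
by move=> [[q1 [q1_path <-]] q1_min] [[q2 [q2_path <-]] q2_min];
  apply: Rle_antisym; [apply: q1_min | apply: q2_min].
Qed.

Definition reach a b := exists q, is_path adj a b q.

(* 0 is a junk value on unreachable pairs. *)
Definition pdist a b : R :=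
  match excluded_middle_informative (reach a b) with
  | left ab => proj1_sig (constructive_indefinite_description _ (exists_dist ab))
  | right _ => 0
  end.

Lemma pdist_spec a b : reach a b -> is_dist adj x a b (pdist a b).
Proof.
rewrite /pdist; case: excluded_middle_informative => // ab _.
exact: proj2_sig (constructive_indefinite_description _ (exists_dist ab)).
Qed.

Lemma ballE u r v : ball adj x u r v <-> reach u v /\ pdist u v <= r.
Proof.
split=> [[d [d_dist dr]]|[uv ur]]; last by exists (pdist u v); split; first exact: pdist_spec.
have uv : reach u v by case: d_dist => [[q [q_path _]] _]; exists q.
by rewrite (is_dist_unique (pdist_spec uv) d_dist).
Qed.

Lemma pdist_adj u b v : reach u b -> adj b v -> reach u v /\ pdist u v <= pdist u b + x v.
Proof.
move=> ub bv; have [[q [q_path q_len]] _] := pdist_spec ub.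
suff [q' q'_path q'_len] : exists2 q', is_path adj u v q' & path_len x u q' <= pdist u b + x v.
  split; first by exists q'.
  by have [_ /(_ q' q'_path)] := pdist_spec (ex_intro _ q' q'_path); lra.
have [vq|vq] := boolP (v \in u :: q).
  by have [q' ? ?] := is_path_prefix q_path vq; exists q' => //; have := x_ge0 v; lra.
exists (rcons q v); first exact: is_path_rcons q_path vq bv.
by rewrite path_len_rcons q_len; lra.
Qed.

Lemma pdist_pred u v : reach u v -> u != v ->
  exists b, [/\ reach u b, pdist u b <= pdist u v - x v & adj b v].
Proof.
move=> uv u_v; have [[q [[pq [lq uq]] q_len]] _] := pdist_spec uv.
case/lastP: q pq lq uq q_len => [_ /= vu|q b]; first by rewrite vu eqxx in u_v.
rewrite rcons_path last_rcons => /andP[pq bv] <-; rewrite -rcons_cons rcons_uniq => /andP[_ uq].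
have q_path : is_path adj u (last u q) q by [].
rewrite path_len_rcons => q_len; exists (last u q); split=> //; first by exists q.
by case: (pdist_spec (ex_intro _ q q_path)) => _ /(_ q q_path); lra.
Qed.

Lemma ball_plusE u r v : x u = 0 ->
  ball_plus adj x u r v <-> reach u v /\ pdist u v - x v <= r < pdist u v.
Proof.
move=> xu0; split.
  move=> [v_out [b [/ballE [ub br] bv]]]; have [uv uv_le] := pdist_adj ub bv.
  split=> //; split; first lra.
  by apply: Rnot_le_lt => vr; apply: v_out; apply/ballE.
move=> [uv [lo hi]]; split; first by move/ballE => [_]; lra.
have [vu|u_v] := eqVneq u v; first by move: lo hi; rewrite -vu xu0; lra.
have [b [ub b_le bv]] := pdist_pred uv u_v.
by exists b; split=> //; apply/ballE; split=> //; lra.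
Qed.

Lemma pdist_glue a b v : symmetric adj ->
  (forall q, is_path adj a b q -> 1 <= path_len x a q) ->
  reach a v -> reach b v -> 1 <= pdist a v + pdist b v - x v.
Proof.
move=> adj_sym ab_long av bv.
have [[qa [qa_path <-]] _] := pdist_spec av; have [[qb [qb_path <-]] _] := pdist_spec bv.
have [q q_path q_len] := is_path_glue adj_sym qa_path qb_path.
by have := ab_long q q_path; lra.
Qed.

End SimplePaths.

Lemma is_RInt_const_on (f : R -> R) a b c :
  a <= b -> (forall t, a < t < b -> f t = c) -> is_RInt f a b ((b - a) * c).
Proof.
move=> ab fc; apply: is_RInt_ext (is_RInt_const a b c).
by rewrite Rmin_left // Rmax_right // => t /fc.
Qed.

Lemma ex_RInt_piecewise_const (f : R -> R) (L : seq R) a b : a <= b ->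
  (forall t t', a < t -> t <= t' -> t' < b -> (forall p, p \in L -> ~ t <= p <= t') ->
     f t = f t') ->
  ex_RInt f a b.
Proof.
elim: L a b => [|p L IH] a b ab f_const.
  have [<-|ab'] := Req_dec a b; first exact: ex_RInt_point.
  exists ((b - a) * f ((a + b) / 2)); apply: is_RInt_const_on => // t [a_t t_b].
  by have [tc|ct] := Rle_dec t ((a + b) / 2); [|symmetry]; apply: f_const; try lra.
have [[ap pb]|p_out] := classic (a < p < b).
  apply: (ex_RInt_Chasles _ a p b); [apply: (IH a p) | apply: (IH p b)]; try lra;
    move=> t t' ? ? ? no_L; apply: f_const; try lra;
    move=> q; rewrite inE => /orP[/eqP->|/no_L //]; lra.
apply: (IH a b ab) => t t' ? ? ? no_L; apply: f_const => // q.
by rewrite inE => /orP[/eqP->|/no_L //]; lra.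
Qed.

Lemma is_RInt_big (I : Type) (r : seq I) (F : I -> R -> R) (J : I -> R) a b :
  (forall i, is_RInt (F i) a b (J i)) ->
  is_RInt (fun t => \big[Rplus/0]_(i <- r) F i t) a b (\big[Rplus/0]_(i <- r) J i).
Proof.
move=> FJ; elim: r => [|i r IH].
  rewrite big_nil; have := is_RInt_const a b 0; rewrite /scal /= /mult /= Rmult_0_r.
  by apply: is_RInt_ext => t _; rewrite big_nil.
rewrite big_cons; apply: is_RInt_ext (is_RInt_plus _ _ _ _ _ _ (FJ i) IH) => t _.
by rewrite big_cons.
Qed.

Definition step (c t : R) : R := if Rle_dec c t then 1 else 0.

Definition clamp_half (c : R) : R := Rmax 0 (Rmin c (1/2)).

Lemma step_ge0 c t : 0 <= step c t.
Proof. by rewrite /step; case_Rle_dec; lra. Qed.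

Lemma step_le c1 c2 t : c1 <= c2 -> step c2 t <= step c1 t.
Proof. by rewrite /step => c12; case_Rle_dec; lra. Qed.

Lemma is_RInt_step c : is_RInt (step c) 0 (1/2) (1/2 - clamp_half c).
Proof.
have clamp_in : 0 <= clamp_half c <= 1/2 by rewrite /clamp_half /Rmax /Rmin; case_Rle_dec; lra.
have below : is_RInt (step c) 0 (clamp_half c) ((clamp_half c - 0) * 0).
  apply: is_RInt_const_on; first lra.
  by move=> t; rewrite /step /clamp_half /Rmax /Rmin; case_Rle_dec; lra.
have above : is_RInt (step c) (clamp_half c) (1/2) ((1/2 - clamp_half c) * 1).
  apply: is_RInt_const_on; first lra.
  by move=> t; rewrite /step /clamp_half /Rmax /Rmin; case_Rle_dec; lra.
by have := is_RInt_Chasles _ _ _ _ _ _ below above; rewrite /plus /=; congr is_RInt; lra.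
Qed.

Definition ind (P : Prop) : R := if excluded_middle_informative P then 1 else 0.

Lemma ind_bounds P : 0 <= ind P <= 1.
Proof. by rewrite /ind; case: excluded_middle_informative => _ /=; lra. Qed.

Lemma ind_false (P : Prop) : ~ P -> ind P = 0.
Proof. by rewrite /ind; case: excluded_middle_informative. Qed.

Lemma ind_iff (P Q : Prop) : (P <-> Q) -> ind P = ind Q.
Proof.
rewrite /ind => PQ.
by do 2 case: excluded_middle_informative => //=; [move=> /PQ | move=> q /PQ].
Qed.

Lemma wsetE (V : finType) (w : V -> R) (P : V -> Prop) :
  wset w P = \big[Rplus/0]_(v : V) (w v * ind (P v)).
Proof.
by apply: eq_bigr => v _; rewrite /ind; case: excluded_middle_informative => _ /=; lra.
Qed.

Lemma sum_ind_le (k : nat) (P : 'I_k -> Prop) : \big[Rplus/0]_(l < k) ind (P l) <= INR k.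
Proof. by rewrite -sumR_ord_one; apply: sumR_le => l _; case: (@ind_bounds (P l)). Qed.

Lemma sum_ind_le_but (k : nat) (P : 'I_k -> Prop) (i0 : 'I_k) :
  ~ P i0 -> \big[Rplus/0]_(l < k) ind (P l) <= INR k - 1.
Proof.
move=> not_P.
have -> : \big[Rplus/0]_(l < k) ind (P l) = ind (P i0) + \big[Rplus/0]_(l < k | l != i0) ind (P l).
  by rewrite (bigD1 i0).
have -> : INR k = 1 + \big[Rplus/0]_(l < k | l != i0) 1 by rewrite -sumR_ord_one (bigD1 i0).
have : \big[Rplus/0]_(l < k | l != i0) ind (P l) <= \big[Rplus/0]_(l < k | l != i0) 1.
  by apply: sumR_le => l _; case: (@ind_bounds (P l)).
by rewrite ind_false //; lra.
Qed.

Section Window.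
Variables (k : nat) (reachable : 'I_k -> Prop) (d : 'I_k -> R) (xv : R) (i0 : 'I_k).
Hypotheses (k_ge2 : (2 <= k)%N) (xv_ge0 : 0 <= xv).
Hypotheses (reachable_i0 : reachable i0) (d_i0_min : forall i, reachable i -> d i0 <= d i).
Hypothesis d_sep : forall i j, i <> j -> reachable i -> reachable j -> 1 <= d i + d j - xv.

(* With d i = d(s_i, v) and xv = x_v, this is v ∈ B^+(s_i, t) (see ball_plusE). *)
Definition in_shell (t : R) (i : 'I_k) : Prop := reachable i /\ d i - xv <= t < d i.

Let m := d i0 - xv.

Definition window (t : R) : R :=
  step m t - step (m + xv) t + step (Rmax m (1 - xv - m)) t.

Lemma in_shell_window t i : t < 1/2 -> in_shell t i -> m <= t < m + xv.
Proof.
move=> t_small [ri [lo hi]]; have := d_i0_min ri; rewrite /m; split; first lra.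
have [<-|i_i0] := classic (i = i0); first lra.
by have := d_sep i_i0 ri reachable_i0; lra.
Qed.

Lemma in_other_shell_window t j : j <> i0 -> in_shell t j -> Rmax m (1 - xv - m) <= t.
Proof.
move=> j_i0 [rj [lo _]]; have := d_i0_min rj; have := d_sep j_i0 rj reachable_i0.
by rewrite /m /Rmax; case_Rle_dec; lra.
Qed.

Lemma count_in_shell_le t : t < 1/2 ->
  \big[Rplus/0]_(l < k) ind (exists i, i <> l /\ in_shell t i) <= (INR k - 1) * window t.
Proof.
move=> t_small; have k2 : 2 <= INR k by apply: (le_INR 2); apply/leP.
have [[i i_in]|no_shell] := classic (exists i, in_shell t i); last first.
  rewrite big1 => [|l _]; last by apply: ind_false => [[i [_ ?]]]; apply: no_shell; exists i.
  have := @step_le _ _ t (Rplus_le_compat_l m _ _ xv_ge0); rewrite Rplus_0_r.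
  by have := @step_ge0 (Rmax m (1 - xv - m)) t; rewrite /window; nra.
have [lo hi] := in_shell_window t_small i_in; rewrite /window.
have -> : step m t = 1 by rewrite /step; case_Rle_dec; lra.
have -> : step (m + xv) t = 0 by rewrite /step; case_Rle_dec; lra.
have [[j [j_i0 j_in]]|only_i0] := classic (exists j, j <> i0 /\ in_shell t j).
  have -> : step (Rmax m (1 - xv - m)) t = 1.
    by have := in_other_shell_window j_i0 j_in; rewrite /step; case_Rle_dec; lra.
  by have := sum_ind_le (fun l => exists i, i <> l /\ in_shell t i); lra.
have := @step_ge0 (Rmax m (1 - xv - m)) t.
have := sum_ind_le_but (P := fun l => exists i, i <> l /\ in_shell t i) (i0 := i0) only_i0.
nra.
Qed.

(* If m + xv <= 1/2 the ray [max(m, 1 - xv - m), +oo) misses (0, 1/2);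
   otherwise it meets it in length at most m + xv - 1/2, and [m, m + xv) in
   length at most 1/2 - m. *)
Lemma window_mass_le : exists2 I, is_RInt window 0 (1/2) I & I <= xv.
Proof.
eexists.
  apply: is_RInt_ext (is_RInt_plus _ _ _ _ _ _
    (is_RInt_minus _ _ _ _ _ _ (@is_RInt_step m) (@is_RInt_step (m + xv)))
    (@is_RInt_step (Rmax m (1 - xv - m)))) => t _ //.
by rewrite /plus /minus /plus /opp /= /clamp_half /Rmax /Rmin; case_Rle_dec; lra.
Qed.

End Window.

Section CutWeight.
Variables (V : finType) (adj : rel V) (k : nat) (s : 'I_k -> V) (w x : V -> R).
Hypotheses (adj_sym : symmetric adj) (k_ge2 : (2 <= k)%N) (w_ge0 : forall v, 0 <= w v).
Hypothesis x_feasible : node_mc_feasible adj s x.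

Let x_ge0 : forall v, 0 <= x v. Proof. by case: x_feasible. Qed.
Let x_terminal : forall i, x (s i) = 0. Proof. by case: x_feasible => _ []. Qed.

Let d i v := pdist adj x (s i) v.
Let reachable v i := reach adj (s i) v.

Lemma pdist_terminal_sep v i j : i <> j -> reachable v i -> reachable v j ->
  1 <= d i v + d j v - x v.
Proof.
have [_ [_ sep]] := x_feasible; rewrite /d => i_j vi vj.
have [ij|ji|ij] := ltngtP i j; last by case: i_j; apply: val_inj.
- exact: (pdist_glue x_ge0 adj_sym (sep _ _ ij) vi vj).
- by have := pdist_glue x_ge0 adj_sym (sep _ _ ji) vj vi; lra.
Qed.

Lemma cut_setE l t v :
  cut_set adj s x l t v <-> exists i, i <> l /\ in_shell (reachable v) (d^~ v) (x v) t i.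
Proof.
by split=> [] [i [il shell]]; exists i; split=> //; move: shell;
  rewrite (ball_plusE adj x_ge0 t v (x_terminal i)).
Qed.

Definition breakpoints : seq R :=
  flatten [seq [:: d z.1 z.2 - x z.2; d z.1 z.2] | z <- enum {: 'I_k * V}].

Lemma cut_set_stable l t t' v : t <= t' ->
  (forall p, p \in breakpoints -> ~ t <= p <= t') ->
  cut_set adj s x l t v <-> cut_set adj s x l t' v.
Proof.
move=> tt' no_break; rewrite !cut_setE.
have shell_iff i : in_shell (reachable v) (d^~ v) (x v) t i <->
                   in_shell (reachable v) (d^~ v) (x v) t' i.
  have bp p : p \in [:: d i v - x v; d i v] -> ~ t <= p <= t'.
    by move=> p_bp; apply: no_break; apply/flatten_mapP; exists (i, v); rewrite ?mem_enum.
  have no_lo := bp _ (mem_head _ _); have no_hi := bp (d i v) (mem_last _ [:: d i v]).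
  by split=> [] [vi [lo hi]]; split=> //; split; lra.
by split=> [] [i [il /shell_iff shell]]; exists i.
Qed.

Lemma avg_cut_weight_integrable : ex_RInt (avg_cut_weight adj s w x) 0 (1/2).
Proof.
apply: (ex_RInt_piecewise_const (L := breakpoints)); first lra.
move=> t t' _ tt' _ no_break; rewrite /avg_cut_weight; congr (_ * _).
apply: eq_bigr => l _; rewrite !wsetE; apply: eq_bigr => v _.
by rewrite (ind_iff (cut_set_stable l v tt' no_break)).
Qed.

Lemma avg_cut_weightE t : avg_cut_weight adj s w x t =
  / INR k * \big[Rplus/0]_(v : V) (w v * \big[Rplus/0]_(l < k) ind (cut_set adj s x l t v)).
Proof.
rewrite /avg_cut_weight (eq_bigr _ (fun l _ => wsetE w (cut_set adj s x l t))) exchange_big.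
by congr (_ * _); apply: eq_bigr => v _; rewrite big_distrr.
Qed.

Lemma cut_multiplicity_le v : exists B : R -> R,
  [/\ ex_RInt B 0 (1/2), RInt B 0 (1/2) <= x v &
      forall t, 0 < t < 1/2 ->
        \big[Rplus/0]_(l < k) ind (cut_set adj s x l t v) <= (INR k - 1) * B t].
Proof.
have [[i vi]|unreached] := classic (exists i, reachable v i); last first.
  exists (fun _ => 0); split; first exact: ex_RInt_const.
    by rewrite RInt_const /scal /= /mult /=; have := x_ge0 v; lra.
  move=> t _; rewrite big1 => [|l _]; first lra.
  by apply: ind_false => /cut_setE [i [_ [vi _]]]; apply: unreached; exists i.
have [|i0 [_ vi0 i0_min]] := exists_seq_min (d^~ v) (P := reachable v) (r := enum 'I_k).
  by exists i; rewrite ?mem_enum.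
have [I window_int I_le] := window_mass_le (d^~ v) i0 (x_ge0 v).
exists (window (d^~ v) (x v) i0); split.
- by exists I.
- by rewrite (is_RInt_unique _ _ _ _ window_int).
move=> t [_ t_small].
rewrite (eq_bigr _ (fun l _ => ind_iff (cut_setE l t v))).
apply: count_in_shell_le => //.
- by move=> j vj; apply: i0_min; rewrite ?mem_enum.
- exact: pdist_terminal_sep.
Qed.

Lemma expected_cut_weight_le :
  exists pr : Riemann_integrable (avg_cut_weight adj s w x) 0 (1/2),
    2 * RiemannInt pr <= 2 * (1 - 1 / INR k) * \big[Rplus/0]_(v : V) (w v * x v).
Proof.
have k2 : 2 <= INR k by apply: (le_INR 2); apply/leP.
have [B HB] := choice _ cut_multiplicity_le.
pose bound v := w v * ((INR k - 1) * RInt (B v) 0 (1/2)).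
have bound_int : is_RInt (fun t => / INR k * \big[Rplus/0]_(v : V) (w v * ((INR k - 1) * B v t)))
    0 (1/2) (/ INR k * \big[Rplus/0]_(v : V) bound v).
  apply: is_RInt_scal; apply: is_RInt_big => v.
  by do 2 apply: is_RInt_scal; case: (HB v) => /RInt_correct.
have avg_le := is_RInt_le _ _ 0 (1/2) _ _ ltac:(lra)
  (RInt_correct _ _ _ avg_cut_weight_integrable) bound_int.
have bound_le : \big[Rplus/0]_(v : V) bound v <= (INR k - 1) * \big[Rplus/0]_(v : V) (w v * x v).
  have -> : (INR k - 1) * \big[Rplus/0]_(v : V) (w v * x v) =
            \big[Rplus/0]_(v : V) ((INR k - 1) * (w v * x v)) by rewrite big_distrr.
  apply: sumR_le => v _; case: (HB v) => _ Bv _.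
  have := Rmult_le_compat_l _ _ _ (w_ge0 v) (Rmult_le_compat_l (INR k - 1) _ _ ltac:(lra) Bv).
  by rewrite /bound; lra.
exists (ex_RInt_Reals_0 _ _ _ avg_cut_weight_integrable); rewrite -RInt_Reals.
have -> : 2 * (1 - 1 / INR k) = 2 * / INR k * (INR k - 1) by field; lra.
have inv_k_gt0 : 0 < / INR k by apply: Rinv_0_lt_compat; lra.
suff : RInt (avg_cut_weight adj s w x) 0 (1/2) <= / INR k * \big[Rplus/0]_(v : V) bound v.
  by nra.
apply: avg_le => t t_in; rewrite avg_cut_weightE; apply: Rmult_le_compat_l; first lra.
apply: sumR_le => v _; apply: Rmult_le_compat_l => //.
by case: (HB v) => _ _; apply.
Qed.

End CutWeight.

Theorem mainTheorem11 (V : finType) (adj : rel V) (k : nat) (s : 'I_k -> V)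
  (w x : V -> R) :
  symmetric adj -> irreflexive adj ->
  (2 <= k)%N ->
  injective s ->
  (forall i j : 'I_k, ~~ adj (s i) (s j)) ->
  (forall v, 0 <= w v) ->
  node_mc_feasible adj s x ->
  exists pr : Riemann_integrable (avg_cut_weight adj s w x) 0 (1/2),
    2 * RiemannInt pr <= 2 * (1 - 1 / INR k) * \big[Rplus/0]_(v : V) (w v * x v).
Proof.
move=> adj_sym _ k_ge2 _ _ w_ge0 x_feasible.
exact: expected_cut_weight_le adj_sym k_ge2 w_ge0 x_feasible.
Qed.
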